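(* Let $p_{XYZ}$ be the distribution in which $X$ and $Y$ are independent uniformly distributed bits and $Z=X\wedge Y$. There exists a correlated multi-secret sharing scheme for $p_{XYZ}$ with $H(M_{12})=H(M_{23})=H(M_{31})=\log 3$.
   Context: A correlated multi-secret sharing (CMSS) scheme for a joint distribution $p_{XYZ}$ on finite sets is a conditional distribution $p_{M_{12}M_{23}M_{31}|XYZ}$ mapping secrets $(X,Y,Z)\sim p_{XYZ}$ probabilistically to shares $(M_{12},M_{23},M_{31})$ such that (correctness) $H(X|M_{12},M_{31})=H(Y|M_{12},M_{23})=H(Z|M_{23},M_{31})=0$ and (privacy) $I((M_{12},M_{31});(Y,Z)|X)=0$, $I((M_{12},M_{23});(X,Z)|Y)=0$, $I((M_{23},M_{31});(X,Y)|Z)=0$. Logs base 2. *)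

From mathcomp Require Import all_boot all_order all_algebra.
From mathcomp Require Import reals exp.
Set Implicit Arguments. Unset Strict Implicit. Unset Printing Implicit Defensive.
Import Order.TTheory GRing.Theory Num.Theory.
Local Open Scope ring_scope.

Section InfoTheory.
Variable R : realType.

Definition log2 (x : R) : R := ln x / ln 2.

Definition is_pmf (T : finType) (P : T -> R) : Prop :=
  (forall t, 0 <= P t) /\ \sum_(t : T) P t = 1.

Definition law (T A : finType) (P : T -> R) (f : T -> A) (a : A) : R :=
  \sum_(t : T | f t == a) P t.

Definition entropy (T A : finType) (P : T -> R) (f : T -> A) : R :=
  - \sum_(a : A) (if law P f a == 0 then 0 else law P f a * log2 (law P f a)).

Definition pairRV (T A B : finType) (f : T -> A) (g : T -> B) : T -> A * B :=
  fun t => (f t, g t).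

Definition cond_entropy (T A B : finType) (P : T -> R) (f : T -> A) (g : T -> B) : R :=
  entropy P (pairRV f g) - entropy P g.

Definition cond_mutinfo (T A B C : finType) (P : T -> R)
    (f : T -> A) (g : T -> B) (h : T -> C) : R :=
  cond_entropy P f h - cond_entropy P f (pairRV g h).

End InfoTheory.

(* Secrets (X,Y,Z) in SX*SY*SZ, shares
   (M12,M23,M31) in M1*M2*M3.  The underlying probability space is
   (SX*SY*SZ) * (M1*M2*M3) with mass  p(x,y,z) * q((m12,m23,m31) | (x,y,z)). *)
Section CMSS.
Variables (R : realType) (SX SY SZ M1 M2 M3 : finType).
Notation Sec := (prod (prod SX SY) SZ).
Notation Sh := (prod (prod M1 M2) M3).
Notation Om := (prod Sec Sh).

Definition joint (p : Sec -> R) (q : Sec -> Sh -> R) : Om -> R :=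
  fun w => p w.1 * q w.1 w.2.

Definition rvX (w : Om) : SX := w.1.1.1.
Definition rvY (w : Om) : SY := w.1.1.2.
Definition rvZ (w : Om) : SZ := w.1.2.
Definition rvM12 (w : Om) : M1 := w.2.1.1.
Definition rvM23 (w : Om) : M2 := w.2.1.2.
Definition rvM31 (w : Om) : M3 := w.2.2.

Definition is_cond_distr (q : Sec -> Sh -> R) : Prop :=
  forall s, is_pmf (q s).

Definition is_CMSS (p : Sec -> R) (q : Sec -> Sh -> R) : Prop :=
  let P := joint p q in
  is_cond_distr q /\
  cond_entropy P rvX (pairRV rvM12 rvM31) = 0 /\
  cond_entropy P rvY (pairRV rvM12 rvM23) = 0 /\
  cond_entropy P rvZ (pairRV rvM23 rvM31) = 0 /\
  cond_mutinfo P (pairRV rvM12 rvM31) (pairRV rvY rvZ) rvX = 0 /\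
  cond_mutinfo P (pairRV rvM12 rvM23) (pairRV rvX rvZ) rvY = 0 /\
  cond_mutinfo P (pairRV rvM23 rvM31) (pairRV rvX rvY) rvZ = 0.

End CMSS.

Definition p_AND (R : realType) (s : bool * bool * bool) : R :=
  if s.2 == s.1.1 && s.1.2 then 4^-1 else 0.

From mathcomp Require Import all_boot all_order all_algebra.
From mathcomp Require Import reals exp.
From mathcomp Require Import ring lra.
Set Implicit Arguments. Unset Strict Implicit. Unset Printing Implicit Defensive.
Import Order.TTheory GRing.Theory Num.Theory.
Local Open Scope ring_scope.

(* Take shares in a three-letter alphabet and let the secrets be their equality
   pattern: X = [M12 = M31], Y = [M12 = M23], Z = [M23 = M31], so that each
   party decodes its secret by comparing its two shares.  The patterns with
   Z = X && Y are exactly the realizable ones (all equal, one equal pair, all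
   distinct), and the shares are drawn uniformly among the triples with the
   given pattern.  Up to relabelling the alphabet, a party's pair of shares is
   then uniform among the pairs with the right equality bit, so it depends on
   the secrets only through that party's own secret; this conditional
   independence gives privacy, and each single share is uniform, of entropy
   log 3. *)

Section Log2.
Variable R : realType.

Lemma log2M (x y : R) : 0 < x -> 0 < y -> log2 (x * y) = log2 x + log2 y.
Proof. by move=> x0 y0; rewrite /log2 lnM ?posrE // mulrDl. Qed.

Lemma log2V (x : R) : 0 < x -> log2 x^-1 = - log2 x.
Proof. by move=> x0; rewrite /log2 lnV ?posrE // mulNr. Qed.

Definition xlog2x (x : R) : R := x * log2 x.

Lemma xlog2x_factor (l u v w : R) :
  0 <= l -> 0 <= u -> 0 <= v -> l <= w -> l * w = u * v ->
  xlog2x l = l * (log2 u + log2 v - log2 w).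
Proof.
move=> l0 u0 v0 lw luv; rewrite /xlog2x.
have [->|l_neq0] := eqVneq l 0; first by rewrite !mul0r.
have l_gt0 : 0 < l by rewrite lt_def l_neq0.
have w_gt0 : 0 < w by exact: lt_le_trans lw.
have uv_gt0 : 0 < u * v by rewrite -luv mulr_gt0.
have u_gt0 : 0 < u.
  by rewrite lt_def u0 andbT; apply: contraTneq uv_gt0 => ->; rewrite mul0r ltxx.
have v_gt0 : 0 < v.
  by rewrite lt_def v0 andbT; apply: contraTneq uv_gt0 => ->; rewrite mulr0 ltxx.
have -> : l = u * v / w by rewrite -luv mulfK ?gt_eqF.
by rewrite log2M ?invr_gt0 ?mulr_gt0 // log2M // log2V.
Qed.

End Log2.

Section Entropy.
Variables (R : realType) (T : finType) (P : T -> R).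

Lemma entropyE (A : finType) (f : T -> A) :
  entropy P f = - \sum_a xlog2x (law P f a).
Proof.
by congr (- _); apply: eq_bigr => a _; case: eqP => // ->; rewrite /xlog2x mul0r.
Qed.

Lemma lawE (A : finType) (f : T -> A) a :
  law P f a = \sum_t (if f t == a then P t else 0).
Proof. exact: big_mkcond. Qed.

Lemma law_ge0 (A : finType) (f : T -> A) a : (forall t, 0 <= P t) -> 0 <= law P f a.
Proof. by move=> P0; apply: sumr_ge0. Qed.

Lemma sum_lawM (A : finType) (f : T -> A) (G : A -> R) :
  \sum_a law P f a * G a = \sum_t P t * G (f t).
Proof.
rewrite [RHS](partition_big f xpredT) //=; apply: eq_bigr => a _.
by rewrite /law mulr_suml; apply: eq_bigr => t /eqP ->.
Qed.

Lemma sum_law_comp (A D : finType) (f : T -> A) (k : T -> D) (phi : A -> D) (G : D -> R) :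
  (forall t, k t = phi (f t)) ->
  \sum_a law P f a * G (phi a) = \sum_d law P k d * G d.
Proof.
by move=> kf; rewrite (sum_lawM f (G \o phi)) sum_lawM; apply: eq_bigr => t _; rewrite kf.
Qed.

Lemma entropy_uniform (A : finType) (f : T -> A) :
  (0 < #|A|)%N -> (forall a, law P f a = #|A|%:R^-1) -> entropy P f = log2 #|A|%:R.
Proof.
move=> A_gt0 lawf; have N_gt0 : 0 < #|A|%:R :> R by rewrite ltr0n.
rewrite entropyE; under eq_bigr do rewrite lawf.
rewrite sumr_const (eq_card (B := A)) // -[xlog2x _ *+ _]mulr_natl.
by rewrite /xlog2x log2V ?invr_gt0 //; field; rewrite gt_eqF.
Qed.

Lemma law_pair_le (A B : finType) (f : T -> A) (g : T -> B) a b :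
  (forall t, 0 <= P t) -> law P (pairRV f g) (a, b) <= law P g b.
Proof.
move=> P0; rewrite !lawE; apply: ler_sum => t _.
by rewrite xpair_eqE; case: (f t == a); case: (g t == b).
Qed.

Lemma cond_entropy_fun (A B : finType) (f : T -> A) (g : T -> B) (phi : B -> A) :
  (forall t, P t != 0 -> f t = phi (g t)) -> cond_entropy P f g = 0.
Proof.
move=> fP; have lawfg a b :
    law P (pairRV f g) (a, b) = if a == phi b then law P g b else 0.
  rewrite !lawE; case: eqP => [->|ab]; last first.
    apply: big1 => t _; have [->|/fP ftg] := eqVneq (P t) 0; first by case: ifP.
    rewrite xpair_eqE; case: eqP => //= fta; case: eqP => // gtb.
    by case: ab; rewrite -fta ftg gtb.
  apply: eq_bigr => t _; rewrite xpair_eqE.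
  have [gtb|] := eqVneq (g t) b; rewrite ?andbF // andbT.
  have [->|/fP ->] := eqVneq (P t) 0; first by case: ifP.
  by rewrite gtb eqxx.
suff E : \sum_(ab : A * B) xlog2x (law P (pairRV f g) ab) =
          \sum_b xlog2x (law P g b) by rewrite /cond_entropy !entropyE E subrr.
rewrite (eq_bigr (fun ab => xlog2x (law P (pairRV f g) (ab.1, ab.2)))); last by case.
rewrite -(pair_bigA _ (fun a b => xlog2x (law P (pairRV f g) (a, b)))) /=.
rewrite exchange_big; apply: eq_bigr => b _.
rewrite (bigD1 (phi b)) //= lawfg eqxx big1 ?addr0 // => a /negPf ab.
by rewrite lawfg ab /xlog2x mul0r.
Qed.

End Entropy.

Section ConditionalIndependence.
Variables (R : realType) (T A B C : finType) (P : T -> R).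
Variables (f : T -> A) (g : T -> B) (h : T -> C).
Hypothesis P_ge0 : forall t, 0 <= P t.
(* Conditional independence of [f] and [g] given [h], with denominators cleared. *)
Hypothesis law_factor : forall a b c,
  law P (pairRV f (pairRV g h)) (a, (b, c)) * law P h c =
  law P (pairRV f h) (a, c) * law P (pairRV g h) (b, c).

Lemma cond_mutinfo_indep : cond_mutinfo P f g h = 0.
Proof.
rewrite /cond_mutinfo /cond_entropy !entropyE.
set L := law P (pairRV f (pairRV g h)).
have lawfgh : \sum_x xlog2x (L x) = \sum_x (L x * log2 (law P (pairRV f h) (x.1, x.2.2)) +
    L x * log2 (law P (pairRV g h) x.2) - L x * log2 (law P h x.2.2)).
  apply: eq_bigr => -[a [b c]] _; rewrite -mulrDr -mulrBr.
  apply: xlog2x_factor; rewrite ?law_ge0 //.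
  exact: le_trans (law_pair_le _ _ _ _ P_ge0) (law_pair_le _ _ _ _ P_ge0).
have lawfh : \sum_d xlog2x (law P (pairRV f h) d) =
    \sum_x L x * log2 (law P (pairRV f h) (x.1, x.2.2)).
  by symmetry; apply: (sum_law_comp P (fun d => log2 (law P (pairRV f h) d))).
have lawgh : \sum_d xlog2x (law P (pairRV g h) d) = \sum_x L x * log2 (law P (pairRV g h) x.2).
  by symmetry; apply: (sum_law_comp P (fun d => log2 (law P (pairRV g h) d))).
have lawh : \sum_d xlog2x (law P h d) = \sum_x L x * log2 (law P h x.2.2).
  by symmetry; apply: (sum_law_comp P (fun d => log2 (law P h d))).
rewrite lawfgh lawfh lawgh lawh.
rewrite sumrB big_split /=; lra.
Qed.

End ConditionalIndependence.

Section Uniform.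
Variables (R : realType) (T : finType) (D : {pred T}).

Definition unif (t : T) : R := if t \in D then #|D|%:R^-1 else 0.

Lemma sum_unif (E : {pred T}) :
  \sum_(t | E t) unif t = #|[predI D & E]|%:R / #|D|%:R.
Proof.
rewrite -big_mkcondr (eq_bigl (mem [predI D & E])) => [|t]; last by rewrite !inE andbC.
by rewrite sumr_const mulr_natl.
Qed.

Lemma unif_pmf : (0 < #|D|)%N -> is_pmf unif.
Proof.
move=> D_gt0; split=> [t|]; first by rewrite /unif; case: ifP; rewrite ?invr_ge0 ?ler0n.
rewrite (sum_unif xpredT) (eq_card (B := D)) => [|t]; last by rewrite !inE andbT.
by rewrite divff // pnatr_eq0 -lt0n.
Qed.

End Uniform.

Arguments unif {R T} D t.
Arguments sum_unif {R T} D E.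
Arguments unif_pmf {R T} D.

Section KernelLaws.
Variables (R : realType) (SX SY SZ M1 M2 M3 : finType).
Notation Sec := (prod (prod SX SY) SZ).
Notation Sh := (prod (prod M1 M2) M3).
Variables (p : Sec -> R) (q : Sec -> Sh -> R).

Definition kernel_law (A : finType) (F : Sh -> A) (s : Sec) (a : A) : R :=
  \sum_(m | F m == a) q s m.

Lemma law_joint (D : finType) (Phi : Sec -> Sh -> D) d :
  law (joint p q) (fun w => Phi w.1 w.2) d = \sum_s p s * \sum_(m | Phi s m == d) q s m.
Proof. by rewrite /law; under [RHS]eq_bigr do rewrite mulr_sumr; rewrite pair_big_dep. Qed.

Lemma law_joint_pair (A D : finType) (F : Sh -> A) (K : Sec -> D) a d :
  law (joint p q) (fun w => (F w.2, K w.1)) (a, d) =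
  \sum_(s | K s == d) p s * kernel_law F s a.
Proof.
rewrite (law_joint (fun s m => (F m, K s))) [RHS]big_mkcond; apply: eq_bigr => s _.
case: eqP => [->|Kd]; first by under eq_bigl do rewrite xpair_eqE eqxx andbT.
by rewrite big1 ?mulr0 // => m; rewrite xpair_eqE (introF eqP Kd) andbF.
Qed.

Lemma law_joint_fst (D : finType) (K : Sec -> D) d :
  is_cond_distr q -> law (joint p q) (fun w => K w.1) d = law p K d.
Proof.
move=> qP; rewrite (law_joint (fun s _ => K s)) /law [RHS]big_mkcond.
by apply: eq_bigr => s _; case: eqP => _; rewrite ?(qP s).2 ?mulr1 // big_pred0_eq mulr0.
Qed.

Lemma cond_mutinfo_kernel (A B C : finType) (F : Sh -> A) (G : Sec -> B) (H : Sec -> C) :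
  (forall s, 0 <= p s) -> is_cond_distr q ->
  (forall s s', p s != 0 -> p s' != 0 -> H s = H s' -> kernel_law F s =1 kernel_law F s') ->
  cond_mutinfo (joint p q) (fun w => F w.2) (fun w => G w.1) (fun w => H w.1) = 0.
Proof.
move=> p_ge0 qP H_kernel; apply: cond_mutinfo_indep => [w|a b c].
  by rewrite mulr_ge0 ?(qP _).1.
rewrite (law_joint_pair F (fun s => (G s, H s))) (law_joint_fst H _ qP).
rewrite (law_joint_pair F H) (law_joint_fst (fun s => (G s, H s)) _ qP) /law.
rewrite [RHS]mulrC !mulr_suml; apply: eq_bigr => s /eqP[_ Hs].
rewrite -mulrA !mulr_sumr; apply: eq_bigr => s' /eqP Hs'.
have [->|ps0] := eqVneq (p s) 0; first by rewrite !mul0r.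
have [->|ps'0] := eqVneq (p s') 0; first by rewrite !(mul0r, mulr0).
by rewrite (H_kernel s s') ?Hs ?Hs' // [kernel_law _ _ _ * _]mulrC.
Qed.

End KernelLaws.

Lemma mem_enum_axiom (T : eqType) (e : seq T) t : Finite.axiom e -> t \in e.
Proof. by move=> eP; rewrite -has_pred1 has_count eP. Qed.

Lemma uniq_enum_axiom (T : eqType) (e : seq T) : Finite.axiom e -> uniq e.
Proof. by move=> eP; apply: count_mem_uniq => t; rewrite eP mem_enum_axiom. Qed.

Lemma perm_index_enum (T : finType) (e : seq T) :
  Finite.axiom e -> perm_eq (index_enum T) e.
Proof. by move=> eP; apply/allP => t _; rewrite /= [index_enum T]unlock enumP eP. Qed.

Lemma card_enumP (T : finType) (e : seq T) (A : {pred T}) :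
  Finite.axiom e -> #|A| = count A e.
Proof.
move=> /perm_index_enum /permP <-.
by rewrite cardE size_filter [index_enum T]unlock.
Qed.

Lemma all_enumP (T : eqType) (e : seq T) (P : pred T) :
  Finite.axiom e -> all P e -> forall t, P t.
Proof. by move=> eP /allP Pe t; apply/Pe/mem_enum_axiom. Qed.

Definition prod_seq (A B : eqType) (ea : seq A) (eb : seq B) : seq (A * B) :=
  [seq (a, b) | a <- ea, b <- eb].

Lemma prod_seq_enumP (A B : eqType) (ea : seq A) (eb : seq B) :
  Finite.axiom ea -> Finite.axiom eb -> Finite.axiom (prod_seq ea eb).
Proof.
move=> eaP ebP; apply: Finite.uniq_enumP => [|[a b]].
  apply: allpairs_uniq; rewrite ?uniq_enum_axiom //.
  by move=> -[? ?] [? ?] _ _ [-> ->].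
by rewrite inE; apply: allpairs_f; apply: mem_enum_axiom.
Qed.

Section AndScheme.
Local Notation Sec := (bool * bool * bool)%type.
Local Notation Sh := ('I_3 * 'I_3 * 'I_3)%type.

Definition share_pattern (m : Sh) : Sec := (m.1.1 == m.2, m.1.1 == m.1.2, m.1.2 == m.2).

Definition and_shares (x y : bool) : {pred Sh} := [pred m | share_pattern m == (x, y, x && y)].

(* The kernel ignores Z, which [p_AND] ties to [X && Y]; this keeps it a
   distribution on the secrets of probability zero as well. *)
Definition and_kernel (R : realType) (s : Sec) : Sh -> R := unif (and_shares s.1.1 s.1.2).

Definition view1 (m : Sh) := (m.1.1, m.2).
Definition view2 (m : Sh) := (m.1.1, m.1.2).
Definition view3 (m : Sh) := (m.1.2, m.2).

(* Explicit enumerations: unlike [enum 'I_3], they evaluate under [vm_compute]. *)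
Definition ord3_enum : seq 'I_3 := [:: @Ordinal 3 0 isT; @Ordinal 3 1 isT; @Ordinal 3 2 isT].

Lemma ord3_enumP : Finite.axiom ord3_enum.
Proof. by apply: Finite.uniq_enumP => // -[[|[|[|]]] i]. Qed.

Definition share_enum : seq Sh := prod_seq (prod_seq ord3_enum ord3_enum) ord3_enum.

Lemma share_enumP : Finite.axiom share_enum.
Proof. by do !apply: prod_seq_enumP; apply: ord3_enumP. Qed.

Lemma and_shares_gt0 x y : (0 < #|and_shares x y|)%N.
Proof.
rewrite (card_enumP _ share_enumP).
by case: x; case: y; vm_compute.
Qed.

(* Given the secrets [(x, y, x && y)], the view [V] of the shares is uniform on
   [D x y]; stated with counts over explicit enumerations so that it can be
   decided by computation. *)
Definition and_view_balanced (U : eqType) (eU : seq U) (V : Sh -> U)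
    (D : bool -> bool -> {pred U}) : bool :=
  all (fun xy => all (fun u =>
      (0 < count (D xy.1 xy.2) eU)%N &&
      (count [predI and_shares xy.1 xy.2 & [pred m | V m == u]] share_enum
         * count (D xy.1 xy.2) eU
       == count (and_shares xy.1 xy.2) share_enum * (u \in D xy.1 xy.2))%N) eU)
    (prod_seq [:: true; false] [:: true; false]).

Lemma kernel_law_and (R : realType) (U : finType) (eU : seq U) (V : Sh -> U)
    (D : bool -> bool -> {pred U}) :
  Finite.axiom eU -> and_view_balanced eU V D ->
  forall s u, kernel_law (@and_kernel R) V s u = unif (D s.1.1 s.1.2) u.
Proof.
move=> eUP balanced s u.
have /(all_enumP eUP)/(_ u)/andP[] :=
  all_enumP (prod_seq_enumP bool_enumP bool_enumP) balanced (s.1.1, s.1.2).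
rewrite -!(card_enumP _ share_enumP) -!(card_enumP _ eUP) /= => D_gt0 /eqP card_eq.
have C_gt0 := and_shares_gt0 s.1.1 s.1.2.
rewrite /kernel_law /and_kernel (sum_unif _ [pred m | V m == u]) /unif.
case: ifP card_eq => _ /=; rewrite ?muln1 ?muln0 => card_eq.
  move: C_gt0; rewrite -card_eq muln_gt0 => /andP[Cu_gt0 _].
  by rewrite natrM; field; rewrite !pnatr_eq0 -!lt0n Cu_gt0 D_gt0.
move/eqP: card_eq; rewrite muln_eq0 (gtn_eqF D_gt0) orbF => /eqP ->.
by rewrite mul0r.
Qed.

Definition secret_enum : seq Sec :=
  prod_seq (prod_seq [:: true; false] [:: true; false]) [:: true; false].

Lemma secret_enumP : Finite.axiom secret_enum.
Proof. by do !apply: prod_seq_enumP; apply: bool_enumP. Qed.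

Variable R : realType.

Lemma p_AND_ge0 s : 0 <= p_AND R s.
Proof. by rewrite /p_AND; case: ifP; rewrite ?invr_ge0 ?ler0n. Qed.

Lemma p_AND_support s : p_AND R s != 0 -> s.2 = s.1.1 && s.1.2.
Proof. by rewrite /p_AND; case: ifP => [/eqP //|_]; rewrite eqxx. Qed.

Lemma sum_p_AND : \sum_s p_AND R s = 1.
Proof.
rewrite (perm_big _ (perm_index_enum secret_enumP)) /= !big_cons big_nil /p_AND /=.
lra.
Qed.

Lemma and_kernel_distr : is_cond_distr (@and_kernel R).
Proof. by move=> s; apply/unif_pmf/and_shares_gt0. Qed.

Lemma and_joint_support w :
  joint (p_AND R) (@and_kernel R) w != 0 -> share_pattern w.2 = w.1.
Proof.
case: w => [[[x y] z] m]; rewrite /joint mulf_eq0 negb_or => /andP[/p_AND_support /= ->].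
by rewrite /and_kernel /unif inE; case: ifP => [/eqP -> //|_]; rewrite eqxx.
Qed.

Local Notation P := (joint (p_AND R) (@and_kernel R)).

Lemma and_kernel_correct (f : Sec -> bool) (V : Sh -> 'I_3 * 'I_3) :
  (forall m, f (share_pattern m) = ((V m).1 == (V m).2)) ->
  cond_entropy P (fun w => f w.1) (fun w => V w.2) = 0.
Proof.
move=> fV; apply: (cond_entropy_fun (phi := fun v => v.1 == v.2)) => w.
by move/and_joint_support <-; exact: fV.
Qed.

Lemma and_kernel_private (B : finType) (V : Sh -> 'I_3 * 'I_3) (G : Sec -> B)
    (H : Sec -> bool) (Hxy : bool -> bool -> bool) :
  (forall s, p_AND R s != 0 -> H s = Hxy s.1.1 s.1.2) ->
  and_view_balanced (prod_seq ord3_enum ord3_enum) V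
    (fun x y => [pred v | (v.1 == v.2) == Hxy x y]) ->
  cond_mutinfo P (fun w => V w.2) (fun w => G w.1) (fun w => H w.1) = 0.
Proof.
move=> H_supp balanced.
apply: cond_mutinfo_kernel p_AND_ge0 and_kernel_distr _ => s s' ps ps' Hss' v.
have enumP := prod_seq_enumP ord3_enumP ord3_enumP.
by rewrite !(kernel_law_and _ enumP balanced) -!H_supp // Hss'.
Qed.

Lemma entropy_and_share (pi : Sh -> 'I_3) :
  and_view_balanced ord3_enum pi (fun _ _ => xpredT) ->
  entropy P (fun w => pi w.2) = log2 3.
Proof.
move=> balanced; have -> : 3 = #|'I_3|%:R :> R by rewrite card_ord.
apply: entropy_uniform => [|a]; first by rewrite card_ord.
rewrite (law_joint _ _ (fun _ m => pi m)).
under eq_bigr do rewrite -/(kernel_law _ pi _ a) (kernel_law_and _ ord3_enumP balanced).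
by rewrite -mulr_suml sum_p_AND mul1r /unif /= (eq_card (B := 'I_3)).
Qed.

End AndScheme.

Theorem theorem12 (R : realType) :
  exists (M1 M2 M3 : finType)
         (q : bool * bool * bool -> M1 * M2 * M3 -> R),
    is_CMSS (@p_AND R) q /\
    entropy (joint (@p_AND R) q) (@rvM12 bool bool bool M1 M2 M3) = log2 3 /\
    entropy (joint (@p_AND R) q) (@rvM23 bool bool bool M1 M2 M3) = log2 3 /\
    entropy (joint (@p_AND R) q) (@rvM31 bool bool bool M1 M2 M3) = log2 3.
Proof.
exists 'I_3, 'I_3, 'I_3; exists (@and_kernel R).
split; last split; last split.
- split; first exact: and_kernel_distr.
  split; first exact: (@and_kernel_correct R (fun s => s.1.1) view1 (fun _ => erefl)).
  split; first exact: (@and_kernel_correct R (fun s => s.1.2) view2 (fun _ => erefl)).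
  split; first exact: (@and_kernel_correct R (fun s => s.2) view3 (fun _ => erefl)).
  split; first by apply: (@and_kernel_private R _ view1 (fun s => (s.1.2, s.2))
    (fun s => s.1.1) (fun x _ => x)); last vm_compute.
  split; first by apply: (@and_kernel_private R _ view2 (fun s => (s.1.1, s.2))
    (fun s => s.1.2) (fun _ y => y)); last vm_compute.
  apply: (@and_kernel_private R _ view3 (fun s => s.1) (fun s => s.2) andb);
    last by vm_compute.
  exact: p_AND_support.
- by apply: (@entropy_and_share R (fun m => m.1.1)); vm_compute.
- by apply: (@entropy_and_share R (fun m => m.1.2)); vm_compute.
- by apply: (@entropy_and_share R (fun m => m.2)); vm_compute.
Qed.
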